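(* Let $G=(V,E,T,c)$ be a $k$-terminal network and let $S\subset T$ with $S\neq\emptyset,T$. Then for every connected component $C\in CC(E_S)$, the boundary $\delta(C)$ is the minimum cutset separating the terminals $T\cap C$ from $T\setminus C$, i.e. $\delta(C)=E_{T\cap C}$.
   Context: A $k$-terminal network $G=(V,E,T,c)$ is a finite connected undirected graph $(V,E)$ with edge weights (capacities) $c:E\to\mathbb{R}_{>0}$ and a set $T\subseteq V$ of $|T|=k$ terminals. For $F\subseteq E$ let $c(F)=\sum_{e\in F}c(e)$; for $W\subseteq V$ let $\delta(W)$ be the set of edges with exactly one endpoint in $W$. For $S\subset T$ with $S\neq\emptyset,T$, write $\bar S=T\setminus S$; a cut $(W,V\setminus W)$ is $S$-separating if $W\cap T\in\{S,\bar S\}$, and $\mathrm{mincut}_G(S)$ is the minimum of $c(\delta(W))$ over all $S$-separating cuts. It is assumed (e.g. by a generic perturbation of the weights) that the minimizing cutset is unique; it is denoted $E_S$ (so $E_S=E_{\bar S}$). For $F\subseteq E$, $CC(F)$ denotes the set of vertex sets of connected components of $(V,E\setminus F)$. (Each component of $CC(E_S)$ contains at least one terminal and $|CC(E_S)|\ge 2$, so $T\cap C$ is a nonempty proper subset of $T$.) *)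

From HB Require Import structures.
From mathcomp Require Import all_boot all_order all_algebra.
Set Implicit Arguments. Unset Strict Implicit. Unset Printing Implicit Defensive.
Import Order.TTheory GRing.Theory Num.Theory.
Local Open Scope ring_scope.

(* A k-terminal network on a finite vertex type V:
   - E : {set {set V}} is the edge set, each edge being a 2-element vertex set
     (finite undirected simple graph);
   - c : {set V} -> R gives the capacities (only relevant on E);
   - T : {set V} is the terminal set (k = #|T|). *)

Definition is_network (R : realFieldType) (V : finType)
  (E : {set {set V}}) (T : {set V}) (c : {set V} -> R) : Prop :=
  (forall e, e \in E -> #|e| = 2%N) /\
  (forall e, e \in E -> 0 < c e).

Definition adj (V : finType) (E F : {set {set V}}) : rel V :=
  fun x y => [set x; y] \in E :\: F.

Definition connected_graph (V : finType) (E : {set {set V}}) : Prop :=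
  forall x y : V, connect (adj E set0) x y.

Definition delta (V : finType) (E : {set {set V}}) (W : {set V}) : {set {set V}} :=
  [set e in E | #|e :&: W| == 1%N].

Definition capa (R : realFieldType) (V : finType) (c : {set V} -> R)
  (F : {set {set V}}) : R :=
  \sum_(e in F) c e.

Definition CC (V : finType) (E F : {set {set V}}) : {set {set V}} :=
  [set [set y | connect (adj E F) x y] | x in [set: V]].

Definition separating (V : finType) (T S W : {set V}) : bool :=
  (W :&: T == S) || (W :&: T == T :\: S).

Definition proper_terminal_subset (V : finType) (T S : {set V}) : bool :=
  [&& S \subset T, S != set0 & S != T].

Definition is_min_cutset (R : realFieldType) (V : finType)
  (E : {set {set V}}) (T : {set V}) (c : {set V} -> R)
  (S : {set V}) (F : {set {set V}}) : Prop :=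
  (exists W : {set V}, separating T S W /\ F = delta E W) /\
  (forall W : {set V}, separating T S W -> capa c F <= capa c (delta E W)).

Definition unique_min_cuts (R : realFieldType) (V : finType)
  (E : {set {set V}}) (T : {set V}) (c : {set V} -> R) : Prop :=
  forall S : {set V}, proper_terminal_subset T S ->
    forall F1 F2, is_min_cutset E T c S F1 -> is_min_cutset E T c S F2 -> F1 = F2.

From HB Require Import structures.
From mathcomp Require Import all_boot all_order all_algebra.
Import Order.TTheory GRing.Theory Num.Theory.
Local Open Scope ring_scope.
Set Implicit Arguments. Unset Strict Implicit.

(* Write E_S = delta(W0) with W0 a minimum S-separating cut.  A component C
   of the graph without E_S lies on one side of W0, say C within W0, and
   delta(C) is contained in delta(W0).  For any cut W with the same terminals
   as C, the patched set (W0 \ C) u W has the same terminals as W0, and its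
   boundary lies in (delta(W0) \ delta(C)) u delta(W); minimality of W0 thus
   gives c(delta C) <= c(delta W).  Taking W = {} shows that C contains a
   terminal, for otherwise delta(C) would be empty and connectivity would force
   C = V; and C misses the terminals outside W0. *)

Section Boundary.

Variables (V : finType) (E : {set {set V}}).
Hypothesis edge_card2 : forall e, e \in E -> #|e| = 2%N.

Lemma edge_pairP e : e \in E -> exists x y, x != y /\ e = [set x; y].
Proof. by move/edge_card2/eqP/cards2P. Qed.

Lemma card_setI_pair_eq1 (x y : V) (A : {set V}) :
  x != y -> (#|[set x; y] :&: A| == 1%N) = ((x \in A) != (y \in A)).
Proof.
have set1I z : [set z] :&: A = if z \in A then [set z] else set0.
  by case: ifP => zA; apply/setP=> t; rewrite !inE; case: eqP => // ->.
move=> neq_xy; rewrite setIUl !set1I.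
case: (x \in A); case: (y \in A) => /=.
- by rewrite cards2 neq_xy.
- by rewrite setU0 cards1.
- by rewrite set0U cards1.
- by rewrite setU0 cards0.
Qed.

Lemma pair_in_delta (A : {set V}) (x y : V) : x != y ->
  ([set x; y] \in delta E A) = ([set x; y] \in E) && ((x \in A) != (y \in A)).
Proof. by move=> neq_xy; rewrite inE card_setI_pair_eq1. Qed.

Lemma delta_subset (A : {set V}) : delta E A \subset E.
Proof. by apply/subsetP=> e; rewrite inE => /andP[]. Qed.

Lemma delta_set0 : delta E set0 = set0.
Proof. by apply/setP=> e; rewrite !inE setI0 cards0 andbF. Qed.

Lemma deltaC (A : {set V}) : delta E (~: A) = delta E A.
Proof.
apply/setP=> e; case eE: (e \in E); last by rewrite !inE eE.
have [x [y [neq_xy ->]]] := edge_pairP eE.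
by rewrite !pair_in_delta // !inE; case: (x \in A); case: (y \in A).
Qed.

Lemma adj_sym (F : {set {set V}}) : symmetric (adj E F).
Proof. by move=> x y; rewrite /adj setUC. Qed.

Lemma adj_neq (F : {set {set V}}) x y : adj E F x y -> x != y.
Proof.
rewrite /adj inE => /andP[_ /edge_card2]; apply: contra_eqN => /eqP <-.
by rewrite setUid cards1.
Qed.

Lemma adj_delta_mem (W : {set V}) x y :
  adj E (delta E W) x y -> (x \in W) = (y \in W).
Proof.
move=> xy; move: (xy); rewrite /adj inE pair_in_delta ?(adj_neq xy) //.
by case/andP=> nd eE; move: nd; rewrite eE negbK => /eqP.
Qed.

Lemma connect_delta_mem (W : {set V}) x y :
  connect (adj E (delta E W)) x y -> (x \in W) = (y \in W).
Proof. by apply: closed_connect => u v /adj_delta_mem. Qed.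

Lemma delta_component_subset (F : {set {set V}}) x :
  delta E [set y | connect (adj E F) x y] \subset F.
Proof.
apply/subsetP=> e e_delta; apply/negPn/negP => eF.
have eE := subsetP (delta_subset _) e e_delta.
have [u [v [neq_uv e_uv]]] := edge_pairP eE.
have adj_uv : adj E F u v by rewrite /adj -e_uv inE eF eE.
move: e_delta; rewrite e_uv pair_in_delta // !inE.
case/andP=> _ /negP; apply; apply/eqP; apply/idP/idP => [xu|xv].
- exact: connect_trans xu (connect1 adj_uv).
- by apply: connect_trans xv (connect1 _); rewrite adj_sym.
Qed.

Lemma delta_eq0_setT (C : {set V}) :
  connected_graph E -> C != set0 -> delta E C = set0 -> C = setT.
Proof.
move=> conn /set0Pn[x xC] dC0; apply/setP=> y.
rewrite inE -(closed_connect _ (conn x y)) // => u v uv.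
have uvE : [set u; v] \in E by move: uv; rewrite /adj setD0.
apply/idP/idP => h; apply: contraT => h';
  have : [set u; v] \in delta E C
    by rewrite pair_in_delta ?(adj_neq uv) // uvE h (negbTE h').
all: by rewrite dC0 inE.
Qed.

Lemma delta_patch_subset (W0 C W : {set V}) :
  C \subset W0 -> delta E C \subset delta E W0 ->
  delta E ((W0 :\: C) :|: W) \subset (delta E W0 :\: delta E C) :|: delta E W.
Proof.
move=> CW0 dC; apply/subsetP=> e e_delta.
have eE := subsetP (delta_subset _) e e_delta.
have [x [y [neq_xy e_xy]]] := edge_pairP eE.
have /implyP := subsetP dC e; have /implyP := subsetP CW0 x.
have /implyP := subsetP CW0 y.
move: e_delta; rewrite e_xy in_setU in_setD !pair_in_delta // -e_xy eE !inE /=.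
case: (x \in C); case: (y \in C); case: (x \in W0); case: (y \in W0);
  by case: (x \in W); case: (y \in W).
Qed.

Lemma component_subset_side (W : {set V}) x :
  let C := [set y | connect (adj E (delta E W)) x y] in
  C \subset W \/ C \subset ~: W.
Proof.
have side y : y \in [set y | connect (adj E (delta E W)) x y] -> (y \in W) = (x \in W).
  by rewrite inE => /connect_delta_mem ->.
case xW: (x \in W); [left | right]; apply/subsetP=> y /side; rewrite ?inE xW //.
by move=> ->.
Qed.

End Boundary.

Section Capacity.

Variables (R : realFieldType) (V : finType) (c : {set V} -> R).

Lemma capa_setID (A B : {set {set V}}) :
  A \subset B -> capa c B = capa c A + capa c (B :\: A).
Proof. by move=> AB; rewrite /capa (big_setID A) /= (setIidPr AB). Qed.

Lemma capa_le0_set0 (F : {set {set V}}) :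
  (forall e, e \in F -> 0 < c e) -> capa c F <= 0 -> F = set0.
Proof.
move=> c_gt0 capa_le0; apply/eqP/set0Pn => -[e eF].
have : c e <= capa c F.
  rewrite /capa (bigD1 e eF) /= lerDl sumr_ge0 // => f /andP[fF _].
  exact/ltW/c_gt0.
by move/le_trans/(_ capa_le0); rewrite leNgt c_gt0.
Qed.

Variable E : {set {set V}}.
Hypothesis c_ge0 : forall e, e \in E -> 0 <= c e.

Lemma le_capa (A B : {set {set V}}) :
  A \subset B -> B \subset E -> capa c A <= capa c B.
Proof.
move=> AB BE; rewrite (capa_setID AB) lerDl sumr_ge0 // => e eBA.
by apply/c_ge0/(subsetP BE); case/setDP: eBA.
Qed.

Lemma capa_setU_le (A B : {set {set V}}) :
  B \subset E -> capa c (A :|: B) <= capa c A + capa c B.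
Proof.
move=> BE; rewrite (capa_setID (subsetUl A B)) lerD2l le_capa //.
by apply/subsetP=> e; rewrite !inE => /andP[/negbTE->].
Qed.

End Capacity.

Section Terminals.

Variables (V : finType) (T : {set V}).

Lemma setI_patch (W0 C W : {set V}) : C \subset W0 -> W :&: T = C :&: T ->
  ((W0 :\: C) :|: W) :&: T = W0 :&: T.
Proof.
move=> CW0 /setP WC; apply/setP=> t; have := WC t; have /implyP := subsetP CW0 t.
by rewrite !inE; case: (t \in T); case: (t \in C); case: (t \in W); case: (t \in W0).
Qed.

Lemma separatingC (S W : {set V}) :
  S \subset T -> separating T S W -> separating T S (~: W).
Proof.
move=> /subsetP ST /orP[] /eqP/setP WS; apply/orP; [right | left]; apply/eqP/setP=> t;
  have := WS t; have /implyP := ST t; rewrite !inE;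
  by case: (t \in T); case: (t \in S); case: (t \in W).
Qed.

Lemma separating_not_subset (S W : {set V}) :
  proper_terminal_subset T S -> separating T S W -> ~~ (T \subset W).
Proof.
case/and3P=> ST /set0Pn[s sS] S_nT; apply: contraL; rewrite /separating => /setIidPr ->.
rewrite negb_or eq_sym S_nT /=; apply/negP => /eqP/setP/(_ s).
by rewrite !inE sS (subsetP ST s sS).
Qed.

Lemma separating_trace (A W : {set V}) : separating T (T :&: A) W ->
  W :&: T = A :&: T \/ ~: W :&: T = A :&: T.
Proof.
case/orP=> /eqP WA; [left; rewrite WA setIC // | right].
apply/setP=> t; move/setP/(_ t): WA; rewrite !inE.
by case: (t \in T); case: (t \in A); case: (t \in W).
Qed.

End Terminals.

Section ComponentCut.

Variables (R : realFieldType) (V : finType) (E : {set {set V}}) (T : {set V}).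
Variable c : {set V} -> R.
Hypothesis network : is_network E T c.
Variables (S W0 C : {set V}).
Hypothesis S_proper : proper_terminal_subset T S.
Hypothesis W0_separating : separating T S W0.
Hypothesis W0_min :
  forall W, separating T S W -> capa c (delta E W0) <= capa c (delta E W).
Hypothesis C_subset : C \subset W0.
Hypothesis deltaC_subset : delta E C \subset delta E W0.

Let edge_card2 : forall e, e \in E -> #|e| = 2%N := network.1.
Let c_gt0 : forall e, e \in E -> 0 < c e := network.2.
Let c_ge0 e (eE : e \in E) : 0 <= c e := ltW (c_gt0 eE).

Lemma capa_delta_le_same_trace W :
  W :&: T = C :&: T -> capa c (delta E C) <= capa c (delta E W).
Proof.
move=> WC; set P := (W0 :\: C) :|: W.
have P_separating : separating T S P by rewrite /separating setI_patch.
have dP_subset : delta E P \subset (delta E W0 :\: delta E C) :|: delta E W.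
  exact: delta_patch_subset.
have : capa c (delta E C) + capa c (delta E W0 :\: delta E C)
       <= capa c (delta E W0 :\: delta E C) + capa c (delta E W).
  rewrite -capa_setID //; apply: le_trans (W0_min P_separating) _.
  apply: le_trans (capa_setU_le c_ge0 _ (delta_subset _ _)).
  apply: (le_capa c_ge0 dP_subset); rewrite subUset delta_subset andbT.
  exact: subset_trans (subsetDl _ _) (delta_subset _ _).
by rewrite addrC lerD2l.
Qed.

Lemma component_meets_terminals :
  connected_graph E -> C != set0 -> T :&: C != set0.
Proof.
move=> conn C_n0; apply: contraNneq _ (separating_not_subset S_proper W0_separating).
move=> TC0; have deltaC0 : delta E C = set0.
  apply: (@capa_le0_set0 _ _ c) => [e /(subsetP (delta_subset _ _)) /c_gt0 // |].
  have := @capa_delta_le_same_trace set0; rewrite delta_set0 /capa big_set0.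
  by apply; rewrite set0I setIC TC0.
apply: (subset_trans _ C_subset).
by rewrite (delta_eq0_setT edge_card2 conn C_n0 deltaC0) subsetT.
Qed.

Lemma component_misses_terminals : T :&: C != T.
Proof.
apply: contraNneq _ (separating_not_subset S_proper W0_separating) => <-.
exact: subset_trans (subsetIr T C) C_subset.
Qed.

Lemma component_min_cutset : connected_graph E -> C != set0 ->
  proper_terminal_subset T (T :&: C) /\ is_min_cutset E T c (T :&: C) (delta E C).
Proof.
move=> conn C_n0; split.
  by rewrite /proper_terminal_subset subsetIl component_meets_terminals //
    component_misses_terminals.
split; first by exists C; rewrite /separating setIC eqxx.
move=> W /separating_trace[] WC; last rewrite -(deltaC edge_card2 W);
  exact: capa_delta_le_same_trace.
Qed.

End ComponentCut.

Theorem lemma2p3 (R : realFieldType) (V : finType)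
  (E : {set {set V}}) (T : {set V}) (c : {set V} -> R) :
  is_network E T c -> connected_graph E -> unique_min_cuts E T c ->
  forall S : {set V}, proper_terminal_subset T S ->
  forall ES : {set {set V}}, is_min_cutset E T c S ES ->
  forall C : {set V}, C \in CC E ES ->
    proper_terminal_subset T (T :&: C) /\
    is_min_cutset E T c (T :&: C) (delta E C).
Proof.
move=> network conn _ S S_proper _ [[W0 [W0_separating ->]] W0_min] _ /imsetP[x _ ->].
have edge_card2 := network.1.
set C := [set y | connect _ x y].
have C_n0 : C != set0 by apply/set0Pn; exists x; rewrite inE connect0.
have deltaC_subset : delta E C \subset delta E W0 :=
  delta_component_subset edge_card2 _ x.
have [C_subset | C_subsetC] := component_subset_side edge_card2 W0 x.
  exact: (component_min_cutset network S_proper W0_separating W0_min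
            C_subset deltaC_subset conn C_n0).
have W0C_separating : separating T S (~: W0).
  by apply: separatingC W0_separating; case/and3P: S_proper.
have W0C_min W : separating T S W -> capa c (delta E (~: W0)) <= capa c (delta E W).
  by rewrite deltaC //; apply: W0_min.
apply: (component_min_cutset network S_proper W0C_separating W0C_min C_subsetC _ conn C_n0).
by rewrite deltaC.
Qed.
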